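(* Let $\mathbb F$ be an algebraically closed field, let $S$ be a left noetherian domain which is an $\mathbb F$-algebra with trivial center (i.e. $Z(S)=\mathbb F$), and let $B=S[x]$ be the usual polynomial ring in one central variable $x$ over $S$. Let $I=Bf_1+\cdots+Bf_r$ be a left ideal of $B$, where each $f_i\neq 0$ is normal in $B$ (i.e. $Bf_i=f_iB$) and has leading coefficient $\mathrm{lc}(f_i)\in S^*$. If $V(I)=\emptyset$, then $I=B$.
   Context: $B=S[x]$ is regarded as a skew PBW extension of $S$ in one variable. For $z\in S$, $\langle z\rangle$ denotes the two-sided ideal of $B$ generated by $x-z$; $z$ is a root of $f\in B$ iff $f\in\langle z\rangle$. For a subset $T\subseteq B$, $V(T)=\{z\in S: f\in\langle z\rangle \text{ for all } f\in T\}$. $S^*$ denotes the group of units of $S$; $\mathrm{lc}(f)$ is the coefficient of the highest power of $x$ in $f$. *)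

From HB Require Import structures.
From mathcomp Require Import all_boot all_order all_algebra.
Set Implicit Arguments. Unset Strict Implicit. Unset Printing Implicit Defensive.
Import GRing.Theory.
Local Open Scope ring_scope.

Definition is_left_ideal (R : nzRingType) (P : R -> Prop) : Prop :=
  [/\ P 0, (forall a b, P a -> P b -> P (a + b)) & (forall r a, P a -> P (r * a))].

Definition left_noetherian (R : nzRingType) : Prop :=
  forall C : nat -> R -> Prop,
    (forall n, is_left_ideal (C n)) ->
    (forall n a, C n a -> C n.+1 a) ->
    exists N, forall n, (N <= n)%N -> forall a, C n a -> C N a.

(* Domain: nonzero ring without zero divisors (1 != 0 holds in an nzRing). *)
Definition is_domain (R : nzRingType) : Prop :=
  forall a b : R, a * b = 0 -> a = 0 \/ b = 0.

Definition center_is_base (F : fieldType) (S : algType F) : Prop :=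
  forall s : S, (forall t : S, s * t = t * s) -> exists c : F, s = c%:A.

Definition is_unit_elt (R : nzRingType) (u : R) : Prop :=
  exists v : R, v * u = 1 /\ u * v = 1.

Definition is_normal (R : nzRingType) (f : R) : Prop :=
  (forall g : R, exists h : R, g * f = f * h) /\
  (forall g : R, exists h : R, f * g = h * f).

Definition in_left_ideal_gen (R : nzRingType) (r : nat) (f : 'I_r -> R) (g : R)
  : Prop := exists c : 'I_r -> R, g = \sum_(i < r) c i * f i.

(* Membership in the two-sided ideal <z> of S[x] generated by x - z. *)
Definition in_root_ideal (S : nzRingType) (z : S) (g : {poly S}) : Prop :=
  exists n (a b : 'I_n -> {poly S}),
    g = \sum_(i < n) a i * ('X - z%:P) * b i.

Definition Vset (S : nzRingType) (T : {poly S} -> Prop) (z : S) : Prop :=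
  forall g, T g -> in_root_ideal z g.

From HB Require Import structures.
From mathcomp Require Import all_boot all_order all_algebra zify.
Import GRing.Theory.
Local Open Scope ring_scope.

(* Let f be normal in B = S[x] with lead coefficient u a unit,
   u v = v u = 1.  The polynomial v f is monic, and normality of f makes every
   constant t commute past it: t (v f) = (v f) h.  Comparing sizes and leading
   coefficients forces h = t, so every coefficient of v f commutes with all of
   S, i.e. lies in the center F.  Hence f = u * m with m in F[x] (mapped into
   S[x]), and m = v f.
   In F[x] the m_i generate a principal ideal; F being algebraically closed,
   either the m_i share a root c in F, or some F[x]-combination of them is 1.
   In the first case every f_i is a left multiple of x - c, so c lies in V(I),
   contradicting V(I) = {}.  In the second case, mapping the combination into
   S[x] and substituting m_j = v_j f_j exhibits 1 in I, so I = B. *)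

Lemma monic_scale_lead_inv {R : nzRingType} {p : {poly R}} {v : R} :
  v * lead_coef p = 1 -> lead_coef p * v = 1 -> v%:P * p \is monic.
Proof.
move=> vu uv; have vreg : GRing.lreg v.
  by move=> a b /(congr1 (fun x => lead_coef p * x)); rewrite !mulrA uv !mul1r.
by rewrite mul_polyC monicE lead_coef_lreg // vu.
Qed.

(* If a constant t is moved across a monic m, t m = m h, then h is the
   constant t itself (compare sizes, then leading coefficients). *)
Lemma monic_conj_const {R : nzRingType} {m h : {poly R}} {t : R} :
  m \is monic -> t%:P * m = m * h -> h = t%:P.
Proof.
move=> mmon E.
have lead_t : (t%:P * m)`_(size m).-1 = t.
  by rewrite coefCM -lead_coefE (monicP mmon) mulr1.
have [h0 | hnz] := eqVneq h 0.
  by move: lead_t; rewrite E h0 mulr0 coef0 => <-.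
have hsz : (size h <= 1)%N.
  have := size_polyMleq t%:P m; rewrite E size_monicM //.
  have := size_polyC_leq1 t; have : (0 < size m)%N by rewrite size_poly_gt0 monic_neq0.
  lia.
move: lead_t; rewrite E [h]size1_polyC // coefMC -lead_coefE (monicP mmon) mul1r.
by move=> <-.
Qed.

Lemma monic_normal_central_coefs {R : nzRingType} {m : {poly R}} :
  m \is monic -> (forall t : R, exists h, t%:P * m = m * h) ->
  forall i t, t * m`_i = m`_i * t.
Proof.
move=> mmon norm i t; have [h E] := norm t.
have hC := monic_conj_const mmon E.
by have := congr1 (fun p : {poly R} => p`_i) E; rewrite hC /= coefCM coefMC.
Qed.

Lemma central_poly_from_base {F : fieldType} {S : algType F}
  (Scenter : center_is_base S) {p : {poly S}} :
  (forall i t, t * p`_i = p`_i * t) ->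
  exists m : {poly F}, map_poly (in_alg S) m = p.
Proof.
move=> cent.
have base i : exists c : F, p`_i == c%:A.
  by have [c ->] := Scenter (p`_i) (fun t => esym (cent i t)); exists c.
exists (\poly_(i < size p) xchoose (base i)).
apply/polyP => i; rewrite coef_map coef_poly /=.
case: ltnP => Hi; first exact/esym/eqP/(xchooseP (base i)).
by rewrite nth_default // scale0r.
Qed.

Lemma normal_unit_lead_decomp {F : fieldType} {S : algType F}
  (Scenter : center_is_base S) {f : {poly S}} :
  is_normal f -> is_unit_elt (lead_coef f) ->
  exists (v : S) (m : {poly F}),
    map_poly (in_alg S) m = v%:P * f /\
    f = (lead_coef f)%:P * map_poly (in_alg S) m.
Proof.
move=> [fnorm _] [v [vu uv]]; set u := lead_coef f in vu uv *.
have fE : f = u%:P * (v%:P * f) by rewrite mulrA -polyCM uv mul1r.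
have mon := monic_scale_lead_inv vu uv.
have norm t : exists h, t%:P * (v%:P * f) = (v%:P * f) * h.
  have [h Hh] := fnorm (u * t * v)%:P; exists h.
  rewrite -mulrA -Hh !mulrA -!polyCM; congr (_%:P * _).
  by rewrite !mulrA vu mul1r.
have [m Hm] := central_poly_from_base Scenter (monic_normal_central_coefs mon norm).
by exists v, m; rewrite Hm.
Qed.

(* In F[x], some F[x]-combination of a finite family divides every member:
   iterate Bezout's identity for gcds. *)
Lemma combination_common_divisor {F : fieldType} {r : nat} (m : 'I_r -> {poly F}) :
  exists a : 'I_r -> {poly F}, forall i, (\sum_(j < r) a j * m j) %| m i.
Proof.
elim: r m => [|r IH] m; first by exists (fun _ => 0) => -[].
have [a' Ha'] := IH (fun j => m (lift ord0 j)).
set d' := \sum_(j < r) _ in Ha'.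
have [u Hu] := Bezoutp d' (m ord0).
exists (fun j => if unlift ord0 j is Some k then u.1 * a' k else u.2).
have -> : \sum_(j < r.+1) (if unlift ord0 j is Some k then u.1 * a' k else u.2) * m j
   = u.1 * d' + u.2 * m ord0.
  rewrite big_ord_recl unlift_none addrC; congr (_ + _).
  by rewrite /d' mulr_sumr; apply: eq_bigr => k _; rewrite liftK mulrA.
move=> i; rewrite (eqp_dvdl _ Hu).
case: (unliftP ord0 i) => [k ->|->]; last exact: dvdp_gcdr.
exact: dvdp_trans (dvdp_gcdl _ _) (Ha' k).
Qed.

Lemma common_root_or_unit_combination {F : closedFieldType} {r : nat}
  (m : 'I_r -> {poly F}) :
  (exists c, forall i, root (m i) c) \/
  exists a : 'I_r -> {poly F}, \sum_(j < r) a j * m j = 1.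
Proof.
have [a Ha] := combination_common_divisor m; set d := \sum_(j < r) _ in Ha.
have [/closed_rootP [c dc] | /negPn /eqP d1] := boolP (size d != 1).
  by left; exists c => i; exact: root_dvdp (Ha i) dc.
right; have dC : d = (d`_0)%:P by apply: size1_polyC; rewrite d1.
have d0 : d`_0 != 0 by apply: contra_eq_neq d1 => H; rewrite dC H size_poly0.
exists (fun j => (d`_0)^-1%:P * a j).
have : (d`_0)^-1%:P * d = 1 by rewrite {2}dC -polyCM mulVf.
by rewrite /d mulr_sumr => <-; apply: eq_bigr => j _; rewrite mulrA.
Qed.

Lemma map_root_factor {F : fieldType} (S : algType F) {m : {poly F}} {c : F} :
  root m c -> exists q : {poly S}, map_poly (in_alg S) m = q * ('X - (c%:A)%:P).
Proof.
move=> /factor_theorem [q ->]; exists (map_poly (in_alg S) q).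
by rewrite rmorphM /= map_polyXsubC.
Qed.

Lemma common_right_factor_root {S : nzRingType} {r : nat} {f : 'I_r -> {poly S}}
  {z : S} :
  (forall i, exists q, f i = q * ('X - z%:P)) -> Vset (in_left_ideal_gen f) z.
Proof.
move=> fact g [c ->]; have [q Hq] := fin_all_exists fact.
exists r, (fun i => c i * q i), (fun _ => 1).
by apply: eq_bigr => i _; rewrite mulr1 {1}Hq mulrA.
Qed.

Lemma left_ideal_gen_one {R : nzRingType} {r : nat} {f : 'I_r -> R} :
  in_left_ideal_gen f 1 -> forall g, in_left_ideal_gen f g.
Proof.
move=> [c one] g; exists (fun i => g * c i).
rewrite -[LHS]mulr1 one mulr_sumr.
by apply: eq_bigr => i _; rewrite mulrA.
Qed.

Theorem corollary4p23 (F : closedFieldType) (S : algType F)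
  (Snoeth : left_noetherian S) (Sdom : is_domain S)
  (Scenter : center_is_base S)
  (r : nat) (f : 'I_r -> {poly S})
  (fnz : forall i, f i != 0)
  (fnormal : forall i, is_normal (f i))
  (flc : forall i, is_unit_elt (lead_coef (f i)))
  (VI_empty : forall z : S, ~ Vset (in_left_ideal_gen f) z) :
  forall g : {poly S}, in_left_ideal_gen f g.
Proof.
have [v decomp] := fin_all_exists
  (fun i => normal_unit_lead_decomp Scenter (fnormal i) (flc i)).
have [m /all_and2 [mE fE]] := fin_all_exists decomp.
have [[c c_root] | [a sum1]] := common_root_or_unit_combination m.
  exfalso; apply: (VI_empty c%:A); apply: common_right_factor_root => i.
  have [q qE] := map_root_factor S (c_root i).
  by exists ((lead_coef (f i))%:P * q); rewrite {1}fE qE mulrA.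
apply: left_ideal_gen_one; exists (fun j => map_poly (in_alg S) (a j) * (v j)%:P).
have := congr1 (map_poly (in_alg S)) sum1; rewrite rmorph1 rmorph_sum => <-.
by apply: eq_bigr => j _; rewrite rmorphM /= mE mulrA.
Qed.
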